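(* Let $G$ be a group definable in some first-order structure, satisfying the descending chain condition on definable subgroups. Then: (a) every maximal nilpotent subgroup of $G$ is definable; (a') if $Q$ is a Cartan subgroup of $G$, then $Q$ is definable and $Q^\circ$ is a Carter subgroup of $G$; (b) if $Q$ is a Carter subgroup of $G$, then $Q$ is contained in a maximal nilpotent subgroup $\tilde Q$ of $G$, and every such $\tilde Q$ is a Cartan subgroup of $G$ with $\tilde Q^\circ=Q$.
   Context: The descending chain condition means every strictly descending chain of definable subgroups is finite. For a definable subgroup $H$, $H^\circ$ denotes the smallest definable subgroup of finite index in $H$ (it exists by the chain condition); $H$ is definably connected if $H=H^\circ$. A Cartan subgroup of $G$ is a maximal nilpotent subgroup $Q$ such that every normal finite-index subgroup $X$ of $Q$ has finite index in $N_G(X)$. A Carter subgroup of $G$ is a definable, definably connected, nilpotent subgroup $Q$ of finite index in $N_G(Q)$. *)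

From Stdlib Require Import List PeanoNat.
Import ListNotations.

Inductive formula (R : Type) : Type :=
  | Feq  : nat -> nat -> formula R
  | Frel : R -> list nat -> formula R
  | Fnot : formula R -> formula R
  | Fand : formula R -> formula R -> formula R
  | Fex  : nat -> formula R -> formula R.

Arguments Feq {R}. Arguments Frel {R}. Arguments Fnot {R}.
Arguments Fand {R}. Arguments Fex {R}.

Definition upd {M : Type} (v : nat -> M) (i : nat) (x : M) : nat -> M :=
  fun j => if Nat.eqb j i then x else v j.

Fixpoint sat {R M : Type} (I : R -> list M -> Prop) (v : nat -> M)
    (phi : formula R) : Prop :=
  match phi with
  | Feq i j => v i = v j
  | Frel r args => I r (map v args)
  | Fnot p => ~ sat I v p
  | Fand p q => sat I v p /\ sat I v q
  | Fex i p => exists x, sat I (upd v i x) p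
  end.

(** A group together with a first-order structure on its universe in which
    the graph of the multiplication is definable (with parameters). *)
Record DefGroup := {
  carrier :> Type;
  mul : carrier -> carrier -> carrier;
  inv : carrier -> carrier;
  one : carrier;
  mulA : forall x y z, mul x (mul y z) = mul (mul x y) z;
  mul1g : forall x, mul one x = x;
  mulVg : forall x, mul (inv x) x = one;
  rsym : Type;
  rint : rsym -> list carrier -> Prop;
  mul_definable : exists (phi : formula rsym) (p : nat -> carrier),
      forall x y z, mul x y = z <->
        sat rint (upd (upd (upd p 0 x) 1 y) 2 z) phi
}.

Section Defs.
Variable G : DefGroup.

Definition gset := G -> Prop.

Definition subset (A B : gset) : Prop := forall x, A x -> B x.
Definition seteq (A B : gset) : Prop := forall x, A x <-> B x.

Definition definable (A : gset) : Prop :=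
  exists (phi : formula (rsym G)) (p : nat -> G),
    forall x, A x <-> sat (rint G) (upd p 0 x) phi.

Definition subgroup (H : gset) : Prop :=
  H (one G) /\ (forall x y, H x -> H y -> H (mul G x y)) /\
  (forall x, H x -> H (inv G x)).

Definition def_subgroup (H : gset) : Prop := subgroup H /\ definable H.

Definition DCC : Prop :=
  ~ exists H : nat -> gset,
      (forall n, def_subgroup (H n)) /\
      (forall n, subset (H (S n)) (H n) /\ ~ subset (H n) (H (S n))).

(** K has finite index in H (K a subgroup contained in H): finitely many
    left cosets g K, g in H. *)
Definition finite_index (K H : gset) : Prop :=
  subset K H /\
  exists s : list G, (forall g, In g s -> H g) /\
    forall h, H h -> exists g, In g s /\ K (mul G (inv G g) h).

Definition conn_comp (H H0 : gset) : Prop :=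
  def_subgroup H0 /\ finite_index H0 H /\
  forall K, def_subgroup K -> finite_index K H -> subset H0 K.

Definition def_connected (H : gset) : Prop := conn_comp H H.

Definition conj (g x : G) : G := mul G (mul G g x) (inv G g).
Definition normalizer (X : gset) : gset :=
  fun g => forall x, X x <-> X (conj g x).

Definition normal_in (X H : gset) : Prop :=
  subset X H /\ forall h x, H h -> X x -> X (conj h x).

Definition gen (A : gset) : gset :=
  fun g => forall K, subgroup K -> subset A K -> K g.

Definition comm (x y : G) : G :=
  mul G (mul G (inv G x) (inv G y)) (mul G x y).

Fixpoint lcs (H : gset) (n : nat) : gset :=
  match n with
  | O => H
  | S n => gen (fun g => exists x y, lcs H n x /\ H y /\ g = comm x y)
  end.

Definition nilpotent (H : gset) : Prop :=
  exists n, forall g, lcs H n g -> g = one G.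

Definition max_nilpotent (Q : gset) : Prop :=
  subgroup Q /\ nilpotent Q /\
  forall K, subgroup K -> nilpotent K -> subset Q K -> subset K Q.

Definition Cartan (Q : gset) : Prop :=
  max_nilpotent Q /\
  forall X, subgroup X -> normal_in X Q -> finite_index X Q ->
    finite_index X (normalizer X).

Definition Carter (Q : gset) : Prop :=
  def_subgroup Q /\ def_connected Q /\ nilpotent Q /\
  finite_index Q (normalizer Q).

End Defs.

(* The chain condition gives every subgroup X a smallest definable overgroup (its
   definable hull) and every definable H a connected component H°; whatever
   normalises X, resp. H, normalises these too.

   If H is nilpotent, the hulls D_i of the terms of its lower central series
   satisfy [D_i, D_0] <= D_(i+1): since D_0 normalises each D_j, sets such as
   {x in D_0 | [x, y] in D_(i+1)} are definable subgroups, so minimality of the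
   hulls transfers the corresponding inclusions from the series. Hence D_0 is a
   definable nilpotent overgroup of H, and maximal nilpotent subgroups are
   definable (a). For a Cartan subgroup Q, Q° is normal of finite index in Q,
   hence of finite index in its normaliser (a').

   Let Q be a Carter subgroup and K >= Q nilpotent. The normaliser condition in K
   applied to K ∩ N(Q), whose connected component is Q, forces K <= N(Q). As Q has
   finite index in N(Q), a nilpotent overgroup meeting the most cosets of Q is
   maximal nilpotent. If X has finite index in such a maximal Q~, the definable hull
   of X has connected component Q, so N(X) <= N(Q), and N(Q) contains X with finite
   index (b). *)

From Stdlib Require Import List PeanoNat Lia Classical ClassicalEpsilon.
Import ListNotations.

Declare Scope group_scope.
Delimit Scope group_scope with g.
Notation "x * y" := (mul _ x y) : group_scope.
Notation "x ^-1" := (inv _ x) (at level 2, left associativity, format "x ^-1") : group_scope.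

Section GroupAlgebra.
Variable G : DefGroup.
Local Open Scope group_scope.
Implicit Types x y : G.

Lemma mulgV x : x * x^-1 = one G.
Proof.
  rewrite <- (mul1g G (x * x^-1)), <- (mulVg G x^-1) at 1.
  rewrite <- mulA, (mulA G x^-1 x), mulVg, mul1g. apply mulVg.
Qed.

Lemma mulg1 x : x * one G = x.
Proof. now rewrite <- (mulVg G x), mulA, mulgV, mul1g. Qed.

Lemma mul_eq1_inv x y : y * x = one G -> y = x^-1.
Proof. intro E. now rewrite <- (mulg1 y), <- (mulgV x), mulA, E, mul1g. Qed.

Lemma invK x : x^-1^-1 = x.
Proof. symmetry. apply mul_eq1_inv, mulgV. Qed.

Lemma invM x y : (x * y)^-1 = y^-1 * x^-1.
Proof.
  symmetry. apply mul_eq1_inv.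
  now rewrite <- mulA, (mulA G x^-1), mulVg, mul1g, mulVg.
Qed.

Lemma inv1 : (one G)^-1 = one G.
Proof. symmetry. apply mul_eq1_inv, mul1g. Qed.

Lemma mulgKV x y : x * y * y^-1 = x.
Proof. now rewrite <- mulA, mulgV, mulg1. Qed.

Lemma mulgVK x y : x * y^-1 * y = x.
Proof. now rewrite <- mulA, mulVg, mulg1. Qed.

End GroupAlgebra.

(* Pushes inverses down to letters, left-associates products and cancels adjacent
   inverse pairs; this decides the word identities below. *)
Ltac group_simpl := unfold conj, comm in *;
  repeat progress rewrite ?invM, ?invK, ?inv1, ?mulA, ?mulgKV, ?mulgVK, ?mulgV, ?mulVg,
    ?mul1g, ?mulg1.

Section ConjComm.
Variable G : DefGroup.
Local Open Scope group_scope.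
Implicit Types x y z g h : G.

Lemma conj_mul g x y : conj G g (x * y) = conj G g x * conj G g y.
Proof. now group_simpl. Qed.
Lemma conj_inv g x : conj G g x^-1 = (conj G g x)^-1.
Proof. now group_simpl. Qed.
Lemma conj_one g : conj G g (one G) = one G.
Proof. now group_simpl. Qed.
Lemma conjM g h x : conj G g (conj G h x) = conj G (g * h) x.
Proof. now group_simpl. Qed.
Lemma conj1g x : conj G (one G) x = x.
Proof. now group_simpl. Qed.
Lemma conjVK g x : conj G g^-1 (conj G g x) = x.
Proof. now group_simpl. Qed.
Lemma conjKV g x : conj G g (conj G g^-1 x) = x.
Proof. now group_simpl. Qed.
Lemma conj_comm g x y : conj G g (comm G x y) = comm G (conj G g x) (conj G g y).
Proof. now group_simpl. Qed.
Lemma conj_as_comm g x : conj G g x = x * (comm G g^-1 x)^-1.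
Proof. now group_simpl. Qed.
Lemma commMr x y z : comm G x (y * z) = comm G x z * conj G z^-1 (comm G x y).
Proof. now group_simpl. Qed.
Lemma commVr x y : comm G x y^-1 = conj G y (comm G x y)^-1.
Proof. now group_simpl. Qed.
Lemma commMl x y z : comm G (x * y) z = conj G y^-1 (comm G x z) * comm G y z.
Proof. now group_simpl. Qed.
Lemma commVl x y : comm G x^-1 y = conj G x (comm G x y)^-1.
Proof. now group_simpl. Qed.
Lemma commg1 x : comm G x (one G) = one G.
Proof. now group_simpl. Qed.
Lemma comm1g x : comm G (one G) x = one G.
Proof. now group_simpl. Qed.
Lemma coset_shift a g h : g^-1 * h = (a^-1 * g)^-1 * (a^-1 * h).
Proof. now group_simpl. Qed.

End ConjComm.

Fixpoint ren {R} (f : nat -> nat) (phi : formula R) : formula R :=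
  match phi with
  | Feq i j => Feq (f i) (f j)
  | Frel r l => Frel r (map f l)
  | Fnot p => Fnot (ren f p)
  | Fand p q => Fand (ren f p) (ren f q)
  | Fex i p => Fex (f i) (ren f p)
  end.

Lemma upd_eq {M} (v : nat -> M) i x : upd v i x i = x.
Proof. unfold upd. now rewrite Nat.eqb_refl. Qed.

Lemma upd_ne {M} (v : nat -> M) i x j : j <> i -> upd v i x j = v j.
Proof. intro H. unfold upd. apply Nat.eqb_neq in H. now rewrite H. Qed.

Lemma upd_comp_inj {M} (f : nat -> nat) (v : nat -> M) i x j :
  (forall a b, f a = f b -> a = b) -> upd v (f i) x (f j) = upd (fun k => v (f k)) i x j.
Proof.
  intro finj. destruct (Nat.eq_dec j i) as [->|ne].
  - now rewrite !upd_eq.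
  - rewrite !upd_ne; auto.
Qed.

Lemma sat_ext {R M} (I : R -> list M -> Prop) phi : forall v w,
  (forall j, v j = w j) -> (sat I v phi <-> sat I w phi).
Proof.
  induction phi; intros v w E; simpl.
  - now rewrite !E.
  - now rewrite (map_ext _ _ E).
  - now rewrite (IHphi v w E).
  - now rewrite (IHphi1 v w E), (IHphi2 v w E).
  - split; intros [x Hx]; exists x; (eapply IHphi; [|exact Hx]);
      intro j; unfold upd; destruct (Nat.eqb j n); auto.
Qed.

Lemma sat_ren {R M} (I : R -> list M -> Prop) (f : nat -> nat)
  (finj : forall a b, f a = f b -> a = b) phi : forall v,
  sat I v (ren f phi) <-> sat I (fun j => v (f j)) phi.
Proof.
  induction phi; intros v; simpl.
  - tauto.
  - now rewrite map_map.
  - now rewrite IHphi.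
  - now rewrite IHphi1, IHphi2.
  - split; intros [x Hx]; exists x; rewrite IHphi in *; (eapply sat_ext; [|exact Hx]);
      intro j; cbv beta; rewrite (upd_comp_inj f v n x j finj); reflexivity.
Qed.

Lemma nat_parity_ind (P : nat -> Prop) :
  (forall k, P (2 * k)) -> (forall k, P (2 * k + 1)) -> forall n, P n.
Proof.
  intros Peven Podd n. rewrite (Nat.div2_odd n).
  destruct (Nat.odd n); simpl Nat.b2n; [apply Podd|rewrite Nat.add_0_r; apply Peven].
Qed.

Definition interleave {M} (v p : nat -> M) (n : nat) : M :=
  if Nat.even n then v (Nat.div2 n) else p (Nat.div2 n).

Lemma interleave_even {M} (v p : nat -> M) k : interleave v p (2 * k) = v k.
Proof. unfold interleave. now rewrite Nat.even_even, Nat.div2_double. Qed.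

Lemma interleave_odd {M} (v p : nat -> M) k : interleave v p (2 * k + 1) = p k.
Proof. unfold interleave. now rewrite Nat.even_odd, Nat.div2_odd'. Qed.

Lemma interleave_inj (a b : nat -> nat) :
  (forall x y, a x = a y -> x = y) -> (forall x y, b x = b y -> x = y) ->
  (forall x y, a x <> b y) -> forall x y, interleave a b x = interleave a b y -> x = y.
Proof.
  intros ainj binj ab x y. revert y.
  induction x using nat_parity_ind; intro y; induction y using nat_parity_ind;
    rewrite ?interleave_even, ?interleave_odd; intro E.
  - now rewrite (ainj _ _ E).
  - now destruct (ab _ _ E).
  - now destruct (ab _ _ (eq_sym E)).
  - now rewrite (binj _ _ E).
Qed.

Definition scons {M} (x : M) (v : nat -> M) (n : nat) : M :=
  match n with 0 => x | S m => v m end.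

Section Definability.
Variable G : DefGroup.

(* The formula reads the valuation [v] at even indices and the parameters [p] at
   odd ones. *)
Definition def_pred (P : (nat -> G) -> Prop) : Prop :=
  exists (phi : formula (rsym G)) (p : nat -> G),
    forall v, P v <-> sat (rint G) (interleave v p) phi.

Lemma def_pred_ext (P Q : (nat -> G) -> Prop) :
  (forall v, P v <-> Q v) -> def_pred P -> def_pred Q.
Proof. intros E [phi [p Hp]]. exists phi, p. intro v. rewrite <- E. apply Hp. Qed.

Lemma def_pred_not P : def_pred P -> def_pred (fun v => ~ P v).
Proof. intros [phi [p Hp]]. exists (Fnot phi), p. intro v. simpl. now rewrite Hp. Qed.

Lemma def_pred_and P Q : def_pred P -> def_pred Q -> def_pred (fun v => P v /\ Q v).
Proof.
  intros [phi1 [p1 H1]] [phi2 [p2 H2]].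
  set (f1 := interleave (fun k => 2 * k) (fun k => 2 * (2 * k) + 1)).
  set (f2 := interleave (fun k => 2 * k) (fun k => 2 * (2 * k + 1) + 1)).
  assert (i1 : forall x y, f1 x = f1 y -> x = y) by (apply interleave_inj; intros; lia).
  assert (i2 : forall x y, f2 x = f2 y -> x = y) by (apply interleave_inj; intros; lia).
  exists (Fand (ren f1 phi1) (ren f2 phi2)), (interleave p1 p2).
  intro v. simpl. rewrite (sat_ren _ _ i1), (sat_ren _ _ i2), H1, H2.
  split; intros [A B]; split; (eapply sat_ext; [|eassumption]);
    intro j; induction j using nat_parity_ind; unfold f1, f2;
    now rewrite ?interleave_even, ?interleave_odd, ?interleave_even.
Qed.

Lemma def_pred_rename (f : nat -> nat) P : (forall a b, f a = f b -> a = b) ->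
  def_pred P -> def_pred (fun v => P (fun i => v (f i))).
Proof.
  intros finj [phi [p Hp]].
  set (g := interleave (fun k => 2 * f k) (fun k => 2 * k + 1)).
  assert (ginj : forall x y, g x = g y -> x = y)
    by (apply interleave_inj; intros a b; [intro; apply finj| |]; lia).
  exists (ren g phi), p. intro v. rewrite (sat_ren _ _ ginj), Hp.
  apply sat_ext. intro j. induction j using nat_parity_ind; unfold g;
    now rewrite ?interleave_even, ?interleave_odd.
Qed.

(* The bound variable is placed at index 1, freed by shifting the parameters. *)
Lemma def_pred_ex P : def_pred P -> def_pred (fun v => exists x, P (scons x v)).
Proof.
  intros [phi [p Hp]].
  set (f := interleave (fun k => match k with 0 => 1 | S m => 2 * m end)
                       (fun k => 2 * k + 3)).
  assert (finj : forall x y, f x = f y -> x = y)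
    by (apply interleave_inj; [intros [|] [|]|intros|intros [|]]; intros; lia).
  exists (Fex 1 (ren f phi)), (scons (one G) p). intro v. cbn [sat].
  assert (E : forall x j, upd (interleave v (scons (one G) p)) 1 x (f j)
                         = interleave (scons x v) p j).
  { intros x j. induction j as [[|m]|k] using nat_parity_ind; unfold f;
      rewrite ?interleave_even, ?interleave_odd.
    - now rewrite upd_eq.
    - rewrite upd_ne by lia. now rewrite interleave_even.
    - rewrite upd_ne by lia. replace (2 * k + 3) with (2 * S k + 1) by lia.
      now rewrite interleave_odd. }
  split; intros [x Hx]; exists x; rewrite ?Hp, ?(sat_ren _ _ finj) in *;
    (eapply sat_ext; [|exact Hx]); intro j; cbv beta; now rewrite E.
Qed.

Lemma def_pred_iff P Q : def_pred P -> def_pred Q -> def_pred (fun v => P v <-> Q v).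
Proof.
  intros HP HQ.
  apply (def_pred_ext (fun v => ~ (P v /\ ~ Q v) /\ ~ (Q v /\ ~ P v))).
  - intro v. destruct (classic (P v)), (classic (Q v)); tauto.
  - apply def_pred_and; apply def_pred_not, def_pred_and; auto; apply def_pred_not; auto.
Qed.

Lemma def_pred_all P : def_pred P -> def_pred (fun v => forall x, P (scons x v)).
Proof.
  intro HP. apply (def_pred_ext (fun v => ~ exists x, ~ P (scons x v))).
  - intro v. split; [intros H x; apply NNPP; eauto | intros H [x Hx]; auto].
  - apply def_pred_not, (def_pred_ex (fun v => ~ P v)), def_pred_not, HP.
Qed.

Lemma def_pred_eq i j : def_pred (fun v => v i = v j).
Proof.
  exists (Feq (2 * i) (2 * j)), (fun _ => one G). intro v; cbn [sat].
  now rewrite !interleave_even.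
Qed.

Lemma def_pred_eq_const i c : def_pred (fun v => v i = c).
Proof.
  exists (Feq (2 * i) (2 * 0 + 1)), (fun _ => c). intro v; cbn [sat].
  now rewrite interleave_even, interleave_odd.
Qed.

Lemma def_pred_mul i j k : i <> j -> j <> k -> i <> k ->
  def_pred (fun v => mul G (v i) (v j) = v k).
Proof.
  intros ij jk ik. destruct (mul_definable G) as [phi [p Hp]].
  set (f := fun n => match n with
                     | 0 => 2 * i | 1 => 2 * j | 2 => 2 * k | S (S (S m)) => 2 * m + 1 end).
  assert (finj : forall x y, f x = f y -> x = y)
    by (intros [|[|[|x]]] [|[|[|y]]]; simpl; intros; lia).
  exists (ren f phi), (fun n => p (S (S (S n)))).
  intro v. rewrite (sat_ren _ _ finj), Hp. apply sat_ext.
  intros [|[|[|m]]]; unfold f; rewrite ?interleave_even, ?interleave_odd; reflexivity.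
Qed.

Lemma def_pred_mem (A : gset G) : definable G A -> def_pred (fun v => A (v 0)).
Proof.
  intros [phi [p Hp]].
  set (f := fun n => match n with 0 => 0 | S m => 2 * m + 1 end).
  assert (finj : forall x y, f x = f y -> x = y) by (intros [|x] [|y]; simpl; intros; lia).
  exists (ren f phi), (fun m => p (S m)).
  intro v. rewrite (sat_ren _ _ finj), Hp. apply sat_ext.
  intros [|m]; unfold f;
    [apply (interleave_even v (fun m => p (S m)) 0)|now rewrite interleave_odd].
Qed.

Lemma definable_of_def_pred (A : gset G) P :
  def_pred P -> (forall v, P v <-> A (v 0)) -> definable G A.
Proof.
  intros [phi [p Hp]] HA.
  set (f := fun n => match n with 0 => 0 | S m => S (S m) end).
  assert (finj : forall x y, f x = f y -> x = y) by (intros [|x] [|y]; simpl; intros; lia).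
  exists (ren f phi), (fun m => interleave (fun _ => one G) p (pred m)).
  intro x. rewrite (sat_ren _ _ finj).
  transitivity (P (scons x (fun _ => one G))); [symmetry; apply HA|rewrite Hp].
  apply sat_ext. intros [|m]; [reflexivity|].
  unfold f, upd, interleave; simpl. destruct m as [|m]; [reflexivity|].
  simpl. now destruct (Nat.even m).
Qed.

Inductive term : Type :=
  | Tvar (i : nat) | Tconst (c : G) | Tmul (a b : term) | Tinv (a : term).

Fixpoint teval (v : nat -> G) (t : term) : G :=
  match t with
  | Tvar i => v i
  | Tconst c => c
  | Tmul a b => mul G (teval v a) (teval v b)
  | Tinv a => inv G (teval v a)
  end.

(* With the arguments shifted, intermediate values are bound by [def_pred_ex] at the
   front of the valuation, so no freshness conditions arise. *)
Lemma def_pred_term_graph t : def_pred (fun v => teval (fun i => v (S i)) t = v 0).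
Proof.
  induction t as [i|c|a IHa b IHb|a IHa]; simpl.
  - apply def_pred_eq.
  - apply (def_pred_ext (fun v => v 0 = c)); [split; auto|apply def_pred_eq_const].
  - set (fa := fun n => match n with 0 => 0 | S i => S (S (S i)) end).
    set (fb := fun n => match n with 0 => 1 | S i => S (S (S i)) end).
    assert (fainj : forall x y, fa x = fa y -> x = y) by (intros [|] [|]; simpl; lia).
    assert (fbinj : forall x y, fb x = fb y -> x = y) by (intros [|] [|]; simpl; lia).
    assert (M : def_pred (fun w => mul G (w 0) (w 1) = w 2)) by (apply def_pred_mul; lia).
    pose proof (def_pred_and _ _ (def_pred_rename fa _ fainj IHa)
                  (def_pred_and _ _ (def_pred_rename fb _ fbinj IHb) M)) as D.
    apply def_pred_ex, def_pred_ex in D. revert D. apply def_pred_ext. intro v. simpl.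
    split; [now intros [y [x [<- [<- E]]]]|].
    intros E. now exists (teval (fun i => v (S i)) b), (teval (fun i => v (S i)) a).
  - set (fa := fun n => match n with 0 => 1 | S i => S (S (S i)) end).
    assert (fainj : forall x y, fa x = fa y -> x = y) by (intros [|] [|]; simpl; lia).
    assert (M : def_pred (fun w => mul G (w 2) (w 1) = w 0)) by (apply def_pred_mul; lia).
    pose proof (def_pred_and _ _ (def_pred_rename fa _ fainj IHa)
                  (def_pred_and _ _ (def_pred_eq_const 0 (one G)) M)) as D.
    apply def_pred_ex, def_pred_ex in D. revert D. apply def_pred_ext. intro v. simpl.
    split; [intros [x [e [<- [-> E]]]]; symmetry; now apply mul_eq1_inv|].
    intros <-. exists (teval (fun i => v (S i)) a), (one G). auto using mulVg.
Qed.

Lemma def_pred_term_mem (A : gset G) t : definable G A -> def_pred (fun v => A (teval v t)).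
Proof.
  intro HA.
  pose proof (def_pred_ex _ (def_pred_and _ _ (def_pred_term_graph t) (def_pred_mem A HA)))
    as D.
  revert D. apply def_pred_ext. intro v. simpl.
  split; [intros [y [E Ay]]; now rewrite <- E in Ay|intro Ay; now exists (teval v t)].
Qed.

End Definability.

Arguments Tvar {G}.
Arguments Tconst {G}.
Arguments Tmul {G}.
Arguments Tinv {G}.

Section DefinableSets.
Variable G : DefGroup.
Implicit Types A B X : gset G.

Lemma definable_inter A B : definable G A -> definable G B ->
  definable G (fun x => A x /\ B x).
Proof.
  intros HA HB.
  apply (definable_of_def_pred _ _ _
    (def_pred_and _ _ _ (def_pred_mem _ A HA) (def_pred_mem _ B HB))).
  reflexivity.
Qed.

Lemma definable_eq1 : definable G (fun x => x = one G).
Proof. apply (definable_of_def_pred _ _ _ (def_pred_eq_const _ 0 (one G))). reflexivity. Qed.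

Lemma definable_full : definable G (fun _ => True).
Proof. apply (definable_of_def_pred _ _ _ (def_pred_eq _ 0 0)). tauto. Qed.

Lemma definable_conj A g : definable G A -> definable G (fun x => A (conj G g x)).
Proof.
  intro HA.
  apply (definable_of_def_pred _ _ _
    (def_pred_term_mem _ A (Tmul (Tmul (Tconst g) (Tvar 0)) (Tinv (Tconst g))) HA)).
  reflexivity.
Qed.

Lemma definable_comm_r A x : definable G A -> definable G (fun y => A (comm G x y)).
Proof.
  intro HA.
  apply (definable_of_def_pred _ _ _ (def_pred_term_mem _ A
    (Tmul (Tmul (Tinv (Tconst x)) (Tinv (Tvar 0))) (Tmul (Tconst x) (Tvar 0))) HA)).
  reflexivity.
Qed.

Lemma definable_comm_l A y : definable G A -> definable G (fun x => A (comm G x y)).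
Proof.
  intro HA.
  apply (definable_of_def_pred _ _ _ (def_pred_term_mem _ A
    (Tmul (Tmul (Tinv (Tvar 0)) (Tinv (Tconst y))) (Tmul (Tvar 0) (Tconst y))) HA)).
  reflexivity.
Qed.

Lemma definable_normalizer X : definable G X -> definable G (normalizer G X).
Proof.
  intro HX.
  apply (definable_of_def_pred _ _ _ (def_pred_all _ _ (def_pred_iff _ _ _
    (def_pred_term_mem _ X (Tvar 0) HX)
    (def_pred_term_mem _ X (Tmul (Tmul (Tvar 1) (Tvar 0)) (Tinv (Tvar 1))) HX)))).
  reflexivity.
Qed.

End DefinableSets.

Section Subgroups.
Variable G : DefGroup.
Local Open Scope group_scope.
Implicit Types H : gset G.

Lemma subgroup_one H : subgroup G H -> H (one G).
Proof. now intros [? _]. Qed.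

Lemma subgroup_mul H x y : subgroup G H -> H x -> H y -> H (x * y).
Proof. intros [_ [HM _]]; auto. Qed.

Lemma subgroup_inv H x : subgroup G H -> H x -> H x^-1.
Proof. intros [_ [_ HV]]; auto. Qed.

End Subgroups.

Ltac subgroup_closed := repeat match goal with
  | Hx : ?P |- ?P => exact Hx
  | |- subgroup _ _ => assumption
  | |- _ (mul _ _ _) => apply subgroup_mul
  | |- _ (inv _ _) => apply subgroup_inv
  | |- _ (one _) => apply subgroup_one
  end.

Section SubgroupConstructions.
Variable G : DefGroup.
Local Open Scope group_scope.
Implicit Types H K L X : gset G.

Lemma subgroup_inter H K : subgroup G H -> subgroup G K -> subgroup G (fun x => H x /\ K x).
Proof.
  intros SH SK. split; [|split].
  - split; now apply subgroup_one.
  - intros x y [] []; split; now subgroup_closed.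
  - intros x []; split; now subgroup_closed.
Qed.

Lemma def_subgroup_inter H K : def_subgroup G H -> def_subgroup G K ->
  def_subgroup G (fun x => H x /\ K x).
Proof. intros [] []. split; [now apply subgroup_inter|now apply definable_inter]. Qed.

Lemma subgroup_conj H g : subgroup G H -> subgroup G (fun x => H (conj G g x)).
Proof.
  intro SH. split; [|split]; intros.
  - rewrite conj_one. now apply subgroup_one.
  - rewrite conj_mul. now apply subgroup_mul.
  - rewrite conj_inv. now apply subgroup_inv.
Qed.

Lemma def_subgroup_conj H g : def_subgroup G H -> def_subgroup G (fun x => H (conj G g x)).
Proof. intros []. split; [now apply subgroup_conj|now apply definable_conj]. Qed.

Lemma def_subgroup_full : def_subgroup G (fun _ => True).
Proof. split; [now repeat split|apply definable_full]. Qed.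

Lemma def_subgroup_trivial : def_subgroup G (fun x => x = one G).
Proof.
  split; [split; [|split]|apply definable_eq1]; intros; subst; auto using mul1g, inv1.
Qed.

Lemma normalizer_subgroup X : subgroup G (normalizer G X).
Proof.
  split; [|split].
  - intro x. now rewrite conj1g.
  - intros g h Ng Nh x. rewrite <- conjM, (Nh x). apply Ng.
  - intros g Ng x. now rewrite (Ng (conj G g^-1 x)), conjKV.
Qed.

Lemma normalizer_intro X g : (forall x, X x -> X (conj G g x)) ->
  (forall x, X x -> X (conj G g^-1 x)) -> normalizer G X g.
Proof. intros Hg HgV x. split; auto. intro Hx. apply HgV in Hx. now rewrite conjVK in Hx. Qed.

Lemma normalizer_conj X g x : normalizer G X g -> X x -> X (conj G g x).
Proof. intros Ng Xx. now apply (Ng x). Qed.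

Lemma subgroup_sub_normalizer H : subgroup G H -> subset G H (normalizer G H).
Proof.
  intros SH g Hg. apply normalizer_intro; intros x Hx; unfold conj; now subgroup_closed.
Qed.

End SubgroupConstructions.

Lemma list_choice (A B : Type) (R : A -> B -> Prop) (l : list A) :
  (forall a, In a l -> exists b, R a b) ->
  exists s : list B, (forall a, In a l -> exists b, In b s /\ R a b) /\
    (forall b, In b s -> exists a, In a l /\ R a b).
Proof.
  induction l as [|a l IH]; intro H.
  - exists []. simpl. tauto.
  - destruct (H a (or_introl eq_refl)) as [b Hb].
    destruct IH as [s [H1 H2]]; [intros; apply H; simpl; auto|].
    exists (b :: s). split.
    + intros a' [<-|Ia]; [exists b; simpl; auto|].
      destruct (H1 a' Ia) as [b' []]. exists b'; simpl; auto.
    + intros b' [<-|Ib]; [exists a; simpl; auto|].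
      destruct (H2 b' Ib) as [a' []]. exists a'; simpl; auto.
Qed.

Section FiniteIndex.
Variable G : DefGroup.
Local Open Scope group_scope.
Implicit Types H K L M : gset G.

Lemma finite_index_refl H : subgroup G H -> finite_index G H H.
Proof.
  intro SH. split; [now intro|]. exists [one G]. split.
  - intros g [<-|[]]. now apply subgroup_one.
  - intros h Hh. exists (one G). simpl. split; auto. now rewrite inv1, mul1g.
Qed.

(* For each coset representative of [K] in [H] meeting [L], pick an element of [L]
   in the same coset. *)
Lemma finite_index_restrict K H L : subgroup G K -> subgroup G L ->
  finite_index G K H -> subset G L H -> finite_index G (fun x => K x /\ L x) L.
Proof.
  intros SK SL [_ [s [_ cov]]] LH.
  destruct (list_choice G G (fun a g => L g /\
     ((exists h, L h /\ K (a^-1 * h)) -> K (a^-1 * g))) s) as [s' [Hs1 Hs2]].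
  { intros a _. destruct (classic (exists h, L h /\ K (a^-1 * h))) as [[h Hh]|N].
    - exists h. tauto.
    - exists (one G). split; [now apply subgroup_one|tauto]. }
  split; [now intros x []|]. exists s'. split.
  - intros g Ig. destruct (Hs2 g Ig) as [a [_ []]]; auto.
  - intros h Lh. destruct (cov h (LH h Lh)) as [a [Ia Ka]].
    destruct (Hs1 a Ia) as [g [Ig [Lg Hr]]].
    specialize (Hr (ex_intro _ h (Logic.conj Lh Ka))).
    exists g. split; auto. split.
    + rewrite (coset_shift G a g h). now subgroup_closed.
    + now subgroup_closed.
Qed.

Lemma finite_index_sub K H L : subgroup G K -> subgroup G L -> subset G K L ->
  finite_index G K H -> subset G L H -> finite_index G K L.
Proof.
  intros SK SL KL FKH LH.
  destruct (finite_index_restrict K H L SK SL FKH LH) as [_ [s [Hs cov]]].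
  split; auto. exists s. split; auto.
  intros h Lh. destruct (cov h Lh) as [g [? []]]. eauto.
Qed.

Lemma finite_index_super K L H : finite_index G K H -> subset G K L -> subset G L H ->
  finite_index G L H.
Proof.
  intros [_ [s [Hs cov]]] KL LH. split; auto. exists s. split; auto.
  intros h Hh. destruct (cov h Hh) as [g []]. eauto.
Qed.

Lemma finite_index_trans K M H : subgroup G H -> finite_index G K M -> finite_index G M H ->
  finite_index G K H.
Proof.
  intros SH [KM [sM [inM covM]]] [MH [sH [inH covH]]].
  split; [intros x Kx; auto|].
  exists (map (fun p => fst p * snd p) (list_prod sH sM)). split.
  - intros g Ig. apply in_map_iff in Ig. destruct Ig as [[a b] [<- Ip]].
    apply in_prod_iff in Ip. destruct Ip. simpl. apply subgroup_mul; auto.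
  - intros h Hh. destruct (covH h Hh) as [a [Ia Ma]]. destruct (covM _ Ma) as [b [Ib Kb]].
    exists (a * b). split.
    + apply in_map_iff. exists (a, b). split; auto. now apply in_prod.
    + replace ((a * b)^-1 * h) with (b^-1 * (a^-1 * h)); auto. now group_simpl.
Qed.

Lemma finite_index_inter K L H : subgroup G H -> subgroup G K -> subgroup G L ->
  finite_index G K H -> finite_index G L H -> finite_index G (fun x => K x /\ L x) H.
Proof.
  intros SH SK SL FK FL. apply (finite_index_trans _ L); auto.
  apply (finite_index_restrict K H); auto. apply FL.
Qed.

Lemma finite_index_conj K H g : subgroup G K -> normalizer G H g ->
  finite_index G K H -> finite_index G (fun x => K (conj G g^-1 x)) H.
Proof.
  intros SK Ng [KH [s [Hs cov]]].
  assert (NgV : normalizer G H g^-1) by now apply subgroup_inv; [apply normalizer_subgroup|].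
  split; [intros x Kx; apply (NgV x); auto|].
  exists (map (conj G g) s). split.
  - intros b Ib. apply in_map_iff in Ib. destruct Ib as [a [<- Ia]]. apply (Ng a); auto.
  - intros h Hh. destruct (cov (conj G g^-1 h)) as [a [Ia Ka]]; [now apply (NgV h)|].
    exists (conj G g a). split; [now apply in_map|].
    now rewrite conj_mul, conj_inv, conjVK.
Qed.

End FiniteIndex.

Section HullsAndComponents.
Variable G : DefGroup.
Local Open Scope group_scope.
Implicit Types H K L X D : gset G.

Definition def_hull X D : Prop :=
  def_subgroup G D /\ subset G X D /\
  forall K, def_subgroup G K -> subset G X K -> subset G D K.

Lemma def_hull_normalizer X D g : def_hull X D -> normalizer G X g -> normalizer G D g.
Proof.
  intros [DD [XD Dmin]] Ng.
  assert (conj_closed : forall h, normalizer G X h -> forall x, D x -> D (conj G h x)).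
  { intros h Nh. apply Dmin; [now apply def_subgroup_conj|].
    intros x Xx. apply XD, (Nh x), Xx. }
  apply normalizer_intro; apply conj_closed; auto.
  apply subgroup_inv; [apply normalizer_subgroup|auto].
Qed.

Lemma conn_comp_normalizer H H0 g : subgroup G H -> conn_comp G H H0 ->
  normalizer G H g -> normalizer G H0 g.
Proof.
  intros SH [[SH0 DH0] [FH0 H0min]] Ng.
  assert (conjV_closed : forall h, normalizer G H h -> forall x, H0 x -> H0 (conj G h^-1 x)).
  { intros h Nh. apply H0min; [now apply def_subgroup_conj; split|].
    now apply finite_index_conj. }
  apply normalizer_intro; [|now apply conjV_closed].
  intros x H0x. rewrite <- (invK G g). apply conjV_closed; auto.
  apply subgroup_inv; [apply normalizer_subgroup|auto].
Qed.

Lemma conn_comp_connected H H0 : subgroup G H -> conn_comp G H H0 -> def_connected G H0.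
Proof.
  intros SH [DH0 [FH0 H0min]]. split; [auto|split].
  - apply finite_index_refl, DH0.
  - intros K DK FK. apply H0min; auto. now apply (finite_index_trans _ K H0).
Qed.

Lemma connected_conn_comp L H0 : subgroup G L -> def_connected G H0 ->
  finite_index G H0 L -> conn_comp G L H0.
Proof.
  intros SL [DH0 [_ H0min]] FH0. split; [auto|split; [auto|]].
  intros K DK FK x H0x.
  enough (H0K : subset G H0 (fun x => K x /\ H0 x)) by now apply H0K.
  apply H0min; [now apply def_subgroup_inter|].
  apply (finite_index_restrict _ K L); auto; [apply DK|apply DH0|apply FH0].
Qed.

End HullsAndComponents.

Section ChainCondition.
Variable G : DefGroup.
Hypothesis hdcc : DCC G.
Implicit Types H K X : gset G.

Lemma dcc_minimal (F : gset G -> Prop) :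
  (forall H, F H -> def_subgroup G H) -> (exists H, F H) ->
  exists M, F M /\ forall K, F K -> subset G K M -> subset G M K.
Proof.
  intros HF [H0 F0]. apply NNPP; intro N.
  assert (step : forall M, F M -> exists K, F K /\ subset G K M /\ ~ subset G M K).
  { intros M FM. apply NNPP; intro N2. apply N. exists M. split; auto.
    intros K FK KM. apply NNPP; intro N3. apply N2. now exists K. }
  set (T := {H | F H}).
  set (next := fun t : T =>
    let e := constructive_indefinite_description _ (step _ (proj2_sig t)) in
    exist F (proj1_sig e) (proj1 (proj2_sig e)) : T).
  set (chain := fun n => Nat.iter n next (exist _ H0 F0)).
  apply hdcc. exists (fun n => proj1_sig (chain n)). split.
  - intro n. apply HF, (proj2_sig (chain n)).
  - intro n. change (chain (S n)) with (next (chain n)). unfold next. simpl.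
    destruct (constructive_indefinite_description _ _) as [K [FK []]]. now simpl.
Qed.

Lemma dcc_least (F : gset G -> Prop) :
  (forall H, F H -> def_subgroup G H) -> (exists H, F H) ->
  (forall H K, F H -> F K -> F (fun x => H x /\ K x)) ->
  exists M, F M /\ forall K, F K -> subset G M K.
Proof.
  intros HF Fne Finter. destruct (dcc_minimal F HF Fne) as [M [FM Mmin]].
  exists M. split; auto. intros K FK x Mx.
  refine (proj2 (Mmin _ (Finter M K FM FK) _ x Mx)). now intros y [].
Qed.

Lemma def_hull_exists X : exists D, def_hull G X D.
Proof.
  destruct (dcc_least (fun H => def_subgroup G H /\ subset G X H)) as [D [[DD XD] Dmin]].
  - now intros H [].
  - exists (fun _ => True). split; [apply def_subgroup_full|now intro].
  - intros H K [DH XH] [DK XK]. split; [now apply def_subgroup_inter|intros x Xx; auto].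
  - exists D. split; [|split]; auto.
Qed.

Lemma conn_comp_exists H : def_subgroup G H -> exists H0, conn_comp G H H0.
Proof.
  intros DH.
  destruct (dcc_least (fun K => def_subgroup G K /\ finite_index G K H)) as [M [[DM FM] Mmin]].
  - now intros K [].
  - exists H. split; auto. apply finite_index_refl, DH.
  - intros K L [DK FK] [DL FL]. split; [now apply def_subgroup_inter|].
    apply finite_index_inter; [apply DH|apply DK|apply DL|auto|auto].
  - exists M. split; [|split]; auto.
Qed.

End ChainCondition.

Section LowerCentralSeries.
Variable G : DefGroup.
Local Open Scope group_scope.
Implicit Types A H K : gset G.

Lemma gen_min A K : subgroup G K -> subset G A K -> subset G (gen G A) K.
Proof. intros SK AK x Ax. now apply Ax. Qed.

Lemma gen_incl A x : A x -> gen G A x.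
Proof. intros Ax K SK AK. auto. Qed.

Lemma gen_subgroup A : subgroup G (gen G A).
Proof.
  split; [|split]; unfold gen.
  - intros K SK _. now apply subgroup_one.
  - intros x y Ax Ay K SK AK. apply subgroup_mul; [|apply Ax|apply Ay]; auto.
  - intros x Ax K SK AK. apply subgroup_inv; [|apply Ax]; auto.
Qed.

Lemma lcs_subgroup H n : subgroup G H -> subgroup G (lcs G H n).
Proof. destruct n; [auto|intros; apply gen_subgroup]. Qed.

Lemma lcs_sub H n : subgroup G H -> subset G (lcs G H n) H.
Proof.
  intro SH. induction n as [|n IHn]; [now intro|].
  apply gen_min; auto. intros g [x [y [Lx [Hy ->]]]]. apply IHn in Lx.
  unfold comm. now subgroup_closed.
Qed.

Lemma lcs_mono K H n : subset G K H -> subset G (lcs G K n) (lcs G H n).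
Proof.
  intro KH. induction n as [|n IHn]; [auto|].
  apply gen_min; [apply gen_subgroup|]. intros g [x [y [Lx [Ky ->]]]].
  apply gen_incl. exists x, y. split; [now apply IHn|split; auto].
Qed.

Lemma lcs_comm H n x y : lcs G H n x -> H y -> lcs G H (S n) (comm G x y).
Proof. intros Lx Hy. apply gen_incl. eauto. Qed.

Lemma lcs_conj H n h x : subgroup G H -> H h -> lcs G H n x -> lcs G H n (conj G h x).
Proof.
  intros SH Hh. revert x. induction n as [|n IHn]; intros x Lx.
  - unfold conj. now subgroup_closed.
  - revert x Lx. apply gen_min; [apply subgroup_conj, gen_subgroup|].
    intros g [a [b [La [Hb ->]]]]. rewrite conj_comm. apply lcs_comm; auto.
    unfold conj. now subgroup_closed.
Qed.

Lemma lcs_normalizer H n h : subgroup G H -> H h -> normalizer G (lcs G H n) h.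
Proof.
  intros SH Hh. apply normalizer_intro; intros x; apply lcs_conj; auto; now subgroup_closed.
Qed.

Lemma nilpotent_sub K H : nilpotent G H -> subset G K H -> nilpotent G K.
Proof. intros [n Hn] KH. exists n. intros g Lg. apply Hn. eapply lcs_mono; eauto. Qed.

End LowerCentralSeries.

Lemma first_failure (P : nat -> Prop) n : ~ P 0 -> P n -> exists i, ~ P i /\ P (S i).
Proof.
  intros N0. induction n as [|n IHn]; intro Pn; [contradiction|].
  destruct (classic (P n)); eauto.
Qed.

Section Nilpotent.
Variable G : DefGroup.
Local Open Scope group_scope.
Implicit Types D E H K : gset G.

(* If [lcs K (S i) ⊆ H] but [lcs K i ⊄ H], any [x ∈ lcs K i \ H] normalises [H],
   since [x h x^-1 = h [x^-1, h]^-1]. *)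
Lemma nilpotent_normalizer_grows H K : subgroup G H -> subgroup G K -> nilpotent G K ->
  subset G H K -> ~ subset G K H -> exists x, K x /\ ~ H x /\ normalizer G H x.
Proof.
  intros SH SK [n Hn] HK NKH.
  destruct (first_failure (fun i => subset G (lcs G K i) H) n) as [i [Ni Pi]]; auto.
  { intros g Lg. rewrite (Hn g Lg). now apply subgroup_one. }
  assert (conj_closed : forall a z, lcs G K i a -> H z -> H (conj G a z)).
  { intros a z La Hz. rewrite conj_as_comm. apply subgroup_mul, subgroup_inv; auto.
    apply Pi, lcs_comm; auto. apply subgroup_inv; [now apply lcs_subgroup|auto]. }
  apply not_all_ex_not in Ni. destruct Ni as [x Nx].
  apply imply_to_and in Nx. destruct Nx as [Lx Nx].
  exists x. split; [now apply (lcs_sub _ K i)|split; [auto|]].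
  apply normalizer_intro; intros z Hz; apply conj_closed; auto.
  apply subgroup_inv; [now apply lcs_subgroup|auto].
Qed.

Lemma def_subgroup_comm_r D E x : def_subgroup G D -> def_subgroup G E ->
  subset G D (normalizer G E) -> def_subgroup G (fun y => D y /\ E (comm G x y)).
Proof.
  intros [SD DD] [SE DE] DN. split; [split; [|split]|].
  - split; [now apply subgroup_one|rewrite commg1; now apply subgroup_one].
  - intros a b [Da Ea] [Db Eb]. split; [now subgroup_closed|].
    rewrite commMr. apply subgroup_mul; auto.
    apply normalizer_conj; auto. apply DN. now subgroup_closed.
  - intros a [Da Ea]. split; [now subgroup_closed|]. rewrite commVr.
    apply normalizer_conj; [now apply DN|now subgroup_closed].
  - now apply definable_inter; [|apply definable_comm_r].
Qed.

Lemma def_subgroup_comm_l D E y : def_subgroup G D -> def_subgroup G E ->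
  subset G D (normalizer G E) -> def_subgroup G (fun x => D x /\ E (comm G x y)).
Proof.
  intros [SD DD] [SE DE] DN. split; [split; [|split]|].
  - split; [now apply subgroup_one|rewrite comm1g; now apply subgroup_one].
  - intros a b [Da Ea] [Db Eb]. split; [now subgroup_closed|].
    rewrite commMl. apply subgroup_mul; auto.
    apply normalizer_conj; auto. apply DN. now subgroup_closed.
  - intros a [Da Ea]. split; [now subgroup_closed|]. rewrite commVl.
    apply normalizer_conj; [now apply DN|now subgroup_closed].
  - now apply definable_inter; [|apply definable_comm_l].
Qed.

Hypothesis hdcc : DCC G.

Lemma nilpotent_def_hull H : subgroup G H -> nilpotent G H ->
  exists D, def_subgroup G D /\ subset G H D /\ nilpotent G D.
Proof.
  intros SH [n Hn].
  assert (exists D : nat -> gset G, forall i, def_hull G (lcs G H i) (D i)) as [D hD].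
  { exists (fun i => proj1_sig (constructive_indefinite_description _
                                   (def_hull_exists G hdcc (lcs G H i)))).
    intro i. exact (proj2_sig (constructive_indefinite_description _ _)). }
  assert (DD : forall i, def_subgroup G (D i)) by (intro i; apply (hD i)).
  assert (LD : forall i, subset G (lcs G H i) (D i)) by (intro i; apply (hD i)).
  assert (Dmin : forall i K, def_subgroup G K -> subset G (lcs G H i) K -> subset G (D i) K)
    by (intro i; apply (hD i)).
  assert (D0_normalizes : forall i, subset G (D 0) (normalizer G (D i))).
  { intro i. apply Dmin; [split; [apply normalizer_subgroup|apply definable_normalizer, DD]|].
    intros h Hh.
    apply (def_hull_normalizer _ (lcs G H i)); [apply hD|now apply lcs_normalizer]. }
  assert (comm_lcs_D0 : forall i x y, lcs G H i x -> D 0 y -> D (S i) (comm G x y)).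
  { intros i x y Lx Dy.
    enough (E : subset G (D 0) (fun y => D 0 y /\ D (S i) (comm G x y))) by now apply E.
    apply Dmin; [now apply def_subgroup_comm_r|].
    intros h Hh. split; [now apply LD|now apply LD, lcs_comm]. }
  assert (comm_D_D0 : forall i x y, D i x -> D 0 y -> D (S i) (comm G x y)).
  { intros i x y Dx Dy.
    enough (E : subset G (D i) (fun x => D 0 x /\ D (S i) (comm G x y))) by now apply E.
    apply Dmin; [now apply def_subgroup_comm_l|].
    intros x' Lx'. split; [apply (LD 0), (lcs_sub _ H i SH), Lx'|now apply comm_lcs_D0]. }
  assert (lcs_D0 : forall i, subset G (lcs G (D 0) i) (D i)).
  { induction i as [|i IHi]; [now intro|]. apply gen_min; [apply DD|].
    intros g [x [y [Lx [Dy ->]]]]. apply comm_D_D0; auto. }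
  exists (D 0). split; [apply DD|split; [apply (LD 0)|]].
  exists n. intros g Lg. apply lcs_D0 in Lg. revert g Lg.
  apply Dmin; [apply def_subgroup_trivial|exact Hn].
Qed.

End Nilpotent.

Lemma exists_max_measure (T : Type) (F : T -> Prop) (m : T -> nat) (B : nat) :
  (exists K, F K) -> (forall K, F K -> m K <= B) ->
  exists K, F K /\ forall K', F K' -> m K' <= m K.
Proof.
  intros [K0 F0] HB. apply NNPP; intro N.
  assert (step : forall K, F K -> exists K', F K' /\ m K < m K').
  { intros K FK. apply NNPP; intro N2. apply N. exists K. split; auto.
    intros K' FK'. apply NNPP; intro N3. apply N2. exists K'. split; auto. lia. }
  assert (unbounded : forall j, exists K, F K /\ j <= m K).
  { induction j as [|j [K [FK Hj]]]; [exists K0; split; auto; lia|].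
    destruct (step K FK) as [K' [FK' H']]. exists K'. split; auto; lia. }
  destruct (unbounded (S B)) as [K [FK HK]]. specialize (HB K FK). lia.
Qed.

Definition count_in {T : Type} (P : T -> Prop) (s : list T) : nat :=
  length (filter (fun g => if excluded_middle_informative (P g) then true else false) s).

Lemma count_in_le {T} (P : T -> Prop) s : count_in P s <= length s.
Proof. apply filter_length_le. Qed.

Lemma count_in_mono {T} (P P' : T -> Prop) s :
  (forall g, P g -> P' g) -> count_in P s <= count_in P' s.
Proof.
  intro PP'. unfold count_in. induction s as [|a s IHs]; simpl; auto.
  destruct (excluded_middle_informative (P a)), (excluded_middle_informative (P' a));
    simpl; try lia. exfalso; auto.
Qed.

Lemma count_in_strict {T} (P P' : T -> Prop) s : (forall g, P g -> P' g) ->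
  (exists g, In g s /\ P' g /\ ~ P g) -> count_in P s < count_in P' s.
Proof.
  intros PP' [g [Ig [P'g NPg]]]. induction s as [|a s IHs]; [destruct Ig|].
  pose proof (count_in_mono P P' s PP') as M. unfold count_in in *. simpl.
  destruct Ig as [->|Ig].
  - destruct (excluded_middle_informative (P g)), (excluded_middle_informative (P' g));
      simpl; try contradiction; lia.
  - specialize (IHs Ig).
    destruct (excluded_middle_informative (P a)), (excluded_middle_informative (P' a));
      simpl; try lia. exfalso; auto.
Qed.

Section CartanCarter.
Variable G : DefGroup.
Hypothesis hdcc : DCC G.
Local Open Scope group_scope.
Implicit Types K L Q X : gset G.

Lemma max_nilpotent_definable Q : max_nilpotent G Q -> definable G Q.
Proof.
  intros [SQ [NQ Qmax]].
  destruct (nilpotent_def_hull G hdcc Q SQ NQ) as [D [[SD [phi [p Hp]]] [QD ND]]].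
  specialize (Qmax D SD ND QD).
  exists phi, p. intro x. rewrite <- Hp. split; auto.
Qed.

Lemma Cartan_conn_comp_Carter Q : Cartan G Q -> exists Q0, conn_comp G Q Q0 /\ Carter G Q0.
Proof.
  intros [MQ Qnormal]. pose proof (max_nilpotent_definable Q MQ) as DQ.
  destruct MQ as [SQ [NQ _]].
  destruct (conn_comp_exists G hdcc Q (Logic.conj SQ DQ)) as [Q0 CQ0].
  exists Q0. split; auto. pose proof CQ0 as [DQ0 [FQ0 _]].
  split; [auto|split; [now apply (conn_comp_connected _ Q)|split]].
  - apply (nilpotent_sub _ Q0 Q); auto. apply FQ0.
  - apply Qnormal; [apply DQ0| |auto]. split; [apply FQ0|].
    intros h x Qh Q0x. apply normalizer_conj; auto.
    apply (conn_comp_normalizer _ Q); auto. now apply subgroup_sub_normalizer.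
Qed.

Variable Q : gset G.
Hypothesis hQ : Carter G Q.

Lemma Carter_conn_comp L : subgroup G L -> subset G Q L -> subset G L (normalizer G Q) ->
  conn_comp G L Q.
Proof.
  destruct hQ as [[SQ _] [CQ [_ FQ]]]. intros SL QL LN.
  apply connected_conn_comp; auto. now apply (finite_index_sub _ Q (normalizer G Q)).
Qed.

Lemma Carter_nilpotent_overgroup_normalizes K : subgroup G K -> nilpotent G K ->
  subset G Q K -> subset G K (normalizer G Q).
Proof.
  intros SK NK QK.
  set (KN := fun x => K x /\ normalizer G Q x).
  assert (SKN : subgroup G KN) by (apply subgroup_inter; auto; apply normalizer_subgroup).
  enough (E : subset G K KN) by (intros x Kx; now apply E).
  apply NNPP; intro Nsub.
  destruct (nilpotent_normalizer_grows _ KN K SKN SK NK) as [x [Kx [Nx NKNx]]];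
    [now intros y []|auto|].
  apply Nx. split; auto.
  apply (conn_comp_normalizer _ KN Q x SKN); auto.
  apply Carter_conn_comp; auto; [|now intros y []].
  intros y Qy. split; auto. apply subgroup_sub_normalizer; [apply hQ|auto].
Qed.

Lemma Carter_sub_max_nilpotent : exists Qt, max_nilpotent G Qt /\ subset G Q Qt.
Proof.
  pose proof hQ as [[SQ _] [_ [_ [_ [s [_ cov]]]]]].
  destruct (exists_max_measure (gset G)
              (fun K => subgroup G K /\ nilpotent G K /\ subset G Q K)
              (fun K => count_in K s) (length s)) as [Qt [[SQt [NQt QQt]] Qtmax]].
  - exists Q. split; [auto|split; [apply hQ|now intro]].
  - intros K _. apply count_in_le.
  - exists Qt. split; [|auto]. split; [auto|split; [auto|]].
    intros K SK NK QtK k Kk. apply NNPP; intro Nk.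
    assert (QK : subset G Q K) by (intros x Qx; auto).
    destruct (cov k) as [g [Ig Qg]]; [now apply (Carter_nilpotent_overgroup_normalizes K)|].
    assert (Kg : K g).
    { replace g with (k * (g^-1 * k)^-1) by now group_simpl.
      apply subgroup_mul, subgroup_inv; auto. }
    assert (NQtg : ~ Qt g).
    { intro Qtg. apply Nk. replace k with (g * (g^-1 * k)) by now group_simpl.
      apply subgroup_mul; auto. }
    specialize (Qtmax K (Logic.conj SK (Logic.conj NK QK))).
    pose proof (count_in_strict Qt K s QtK
                  (ex_intro _ g (Logic.conj Ig (Logic.conj Kg NQtg)))).
    lia.
Qed.

Lemma Carter_conn_comp_max_nilpotent Qt : max_nilpotent G Qt -> subset G Q Qt ->
  conn_comp G Qt Q.
Proof.
  intros [SQt [NQt _]] QQt.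
  apply Carter_conn_comp; auto. now apply Carter_nilpotent_overgroup_normalizes.
Qed.

Lemma Carter_max_nilpotent_Cartan Qt : max_nilpotent G Qt -> subset G Q Qt -> Cartan G Qt.
Proof.
  intros MQt QQt. pose proof (max_nilpotent_definable Qt MQt) as DQt.
  pose proof (Carter_conn_comp_max_nilpotent Qt MQt QQt) as CQt.
  split; [auto|]. destruct MQt as [SQt [NQt _]].
  intros X SX [XQt _] FX.
  destruct (def_hull_exists G hdcc X) as [DX HX]. pose proof HX as [[SDX DDX] [XDX DXmin]].
  assert (DXQt : subset G DX Qt) by (apply DXmin; [split|]; auto).
  assert (QDX : subset G Q DX)
    by (apply CQt; [split; auto|now apply (finite_index_super _ X)]).
  assert (CDX : conn_comp G DX Q).
  { apply connected_conn_comp; auto; [now apply (conn_comp_connected _ Qt)|].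
    apply (finite_index_sub _ Q Qt); auto; [apply hQ|apply CQt]. }
  assert (NXQ : subset G (normalizer G X) (normalizer G Q)).
  { intros g Ng. apply (conn_comp_normalizer _ DX); auto.
    now apply (def_hull_normalizer _ X). }
  assert (FXNQ : finite_index G X (normalizer G Q)).
  { apply (finite_index_trans _ X Qt); [apply normalizer_subgroup|auto|].
    apply (finite_index_super _ Q); [apply hQ|auto|].
    now apply Carter_nilpotent_overgroup_normalizes. }
  apply (finite_index_sub _ X (normalizer G Q)); auto;
    [apply normalizer_subgroup|now apply subgroup_sub_normalizer].
Qed.

End CartanCarter.

Theorem lemma2p4 (G : DefGroup) (hdcc : DCC G) :
  (* (a) *)
  (forall Q : gset G, max_nilpotent G Q -> definable G Q) /\
  (* (a') *)
  (forall Q : gset G, Cartan G Q ->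
     definable G Q /\ exists Q0, conn_comp G Q Q0 /\ Carter G Q0) /\
  (* (b) *)
  (forall Q : gset G, Carter G Q ->
     (exists Qt, max_nilpotent G Qt /\ subset G Q Qt) /\
     (forall Qt, max_nilpotent G Qt -> subset G Q Qt ->
        Cartan G Qt /\ conn_comp G Qt Q)).
Proof.
  split; [|split].
  - exact (max_nilpotent_definable G hdcc).
  - intros Q HQ. split.
    + apply (max_nilpotent_definable G hdcc), (proj1 HQ).
    + now apply Cartan_conn_comp_Carter.
  - intros Q HQ. split; [now apply Carter_sub_max_nilpotent|].
    intros Qt MQt QQt. split.
    + now apply (Carter_max_nilpotent_Cartan G hdcc Q).
    + now apply (Carter_conn_comp_max_nilpotent G Q).
Qed.
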